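(* Define $g(1)=1$, $g(2^k-1)=(-1)^k$ for every integer $k>1$, and $g(n)=0$ for all other integers $n\ge 0$. Let $r(n)$ be the Golay–Rudin–Shapiro sequence, defined by $r(0)=1$, $r(2n)=r(n)$, $r(2n+1)=(-1)^n r(n)$ for $n\ge 0$. Then for all $n\ge 0$, $$\det\left(g(i+j+1)\right)_{i,j=0}^{n-1}=r(n),$$ where the determinant of the empty ($n=0$) matrix is $1$.
   Context: Equivalently, $r(n)=(-1)^{\rho(n)}$ where $\rho(n)$ is the number of (possibly overlapping) pairs of adjacent digits $11$ in the binary expansion of $n$. *)

From mathcomp Require Import all_boot all_order all_algebra.
Set Implicit Arguments. Unset Strict Implicit. Unset Printing Implicit Defensive.
Import Order.TTheory GRing.Theory Num.Theory.
Local Open Scope ring_scope.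

(* g(1) = 1, g(2^k - 1) = (-1)^k for k > 1, g(n) = 0 otherwise.
   For n >= 1, n = 2^k - 1 iff n.+1 = 2^k; the only candidate k is
   trunc_log 2 n.+1. *)
Definition g (n : nat) : int :=
  if n == 1%N then 1
  else let k := trunc_log 2 n.+1 in
       if (2 ^ k == n.+1)%N && (1 < k)%N then (-1) ^+ k else 0.

(* Golay-Rudin-Shapiro: r(0)=1, r(2n)=r(n), r(2n+1)=(-1)^n r(n).
   Defined by recursion with fuel (fuel n suffices since n./2 < n for n > 0). *)
Fixpoint r_aux (fuel n : nat) : int :=
  match fuel with
  | 0 => 1
  | fuel'.+1 =>
      if n == 0%N then 1
      else if odd n then (-1) ^+ n./2 * r_aux fuel' n./2
      else r_aux fuel' n./2
  end.

Definition r (n : nat) : int := r_aux n n.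

Example r_small : [seq r i | i <- iota 0 16] =
  [:: 1; 1; 1; -1; 1; 1; -1; 1; 1; 1; 1; -1; -1; -1; 1; -1].
Proof. by []. Qed.
Example g_small : [seq g i | i <- iota 0 16] =
  [:: 0; 1; 0; 1; 0; 0; 0; -1; 0; 0; 0; 0; 0; 0; 0; 1].
Proof. by []. Qed.

From mathcomp Require Import all_boot all_order all_algebra zify ring.
Set Implicit Arguments.
Unset Strict Implicit.
Unset Printing Implicit Defensive.
Import GRing.Theory.
Local Open Scope ring_scope.

(* Write n = 2^k + t with 0 <= t < 2^k and put p = 2^k - 1 - t.  In the
   Hankel matrix H_n = (g(i+j+1)), the last row meets the support of g in a
   single entry, the Mersenne index 2^(k+1) - 1 in column p; expanding along
   that row and then along the symmetric column deletes rows and columns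
   p and n - 1, leaving the minor of the infinite Hankel matrix on the
   indices {0, ..., p-1} U {p+1, ..., n-2}, which has the same shape.  After
   t such double expansions, each contributing -1, one more expansion leaves
   H_p, so det H_n = g(2^(k+1) - 1) (-1)^t det H_p.  Induction on k shows
   that r(2^k + t) = g(2^(k+1) - 1) (-1)^t r(p) as well. *)

Lemma r_aux_fuel f1 f2 n :
  (n <= f1)%N -> (n <= f2)%N -> r_aux f1 n = r_aux f2 n.
Proof.
elim: f1 f2 n => [|f1 IH] [|f2] [|n] //= h1 h2.
by rewrite (IH f2) // leq_uphalf_double; lia.
Qed.

Lemma r_rec n : (0 < n)%N ->
  r n = (if odd n then (-1) ^+ n./2 else 1) * r n./2.
Proof.
case: n => [//|n] _.
have -> : r n.+1 = (if odd n.+1 then (-1) ^+ n.+1./2 else 1) * r_aux n n.+1./2.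
  by rewrite /r /=; case: odd; rewrite ?mul1r.
by rewrite /r (@r_aux_fuel n n.+1./2) // leq_half_double; lia.
Qed.

Lemma r_double m : r m.*2 = r m.
Proof.
by case: m => [//|m]; rewrite r_rec ?double_gt0 // odd_double doubleK mul1r.
Qed.

Lemma r_doubleS m : r m.*2.+1 = (-1) ^+ m * r m.
Proof. by rewrite r_rec //= odd_double uphalf_double. Qed.

Definition mersenne_sign (k : nat) : int := if k is 0 then 1 else (-1) ^+ k.+1.

Lemma mersenne_signS k :
  mersenne_sign k.+1 = - (-1) ^+ (2 ^ k) * mersenne_sign k.
Proof.
case: k => [//|k]; rewrite -signr_odd oddX /= expr0 mulN1r.
by rewrite exprS mulN1r.
Qed.

Lemma mersenne_sign_sqr k : mersenne_sign k * mersenne_sign k = 1.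
Proof. by case: k => //= k; rewrite -exprD -signr_odd addnn odd_double. Qed.

Lemma signrE (R : pzRingType) n : (-1) ^+ n = (if odd n then -1 else 1) :> R.
Proof. by rewrite -signr_odd; case: odd. Qed.

Lemma r_pow2_add k t t' : (t + t' + 1 = 2 ^ k)%N ->
  r (2 ^ k + t) = mersenne_sign k * (-1) ^+ t * r t'.
Proof.
elim: k t t' => [|k IH] t t' ht.
  by have [-> ->] : (t = 0 /\ t' = 0)%N by rewrite expn0 in ht; lia.
have [u [u' [hu parity]]] : exists u u', (u + u' + 1 = 2 ^ k)%N /\
    (t = u.*2 /\ t' = u'.*2.+1 \/ t = u.*2.+1 /\ t' = u'.*2).
  exists t./2, t'./2; rewrite expnS in ht.
  by have := odd_double_half t; have := odd_double_half t'; do 2!case: odd; lia.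
have sign_hu : (-1) ^+ (2 ^ k) = - (-1) ^+ (u + u') :> int.
  by rewrite -hu addn1 exprSr mulrN1.
case: parity => [[-> ->]|[-> ->]].
all: rewrite mersenne_signS expnS mul2n ?addnS -doubleD.
all: rewrite ?r_double r_doubleS ?r_double ?exprD sign_hu.
all: rewrite (IH _ _ hu) !signrE !oddD /= ?odd_double.
all: by case: (odd u); case: (odd u') => /=; ring.
Qed.

Lemma g_eq0 a m : (2 ^ a < m.+1 < 2 ^ a.+1)%N -> g m = 0.
Proof.
case/andP=> lo hi.
have m_neq1 : m != 1%N.
  apply/eqP=> m1; move: lo hi; rewrite m1; case: a => [//|a].
  by rewrite expnS; have := expn_gt0 2 a; lia.
rewrite /g (negbTE m_neq1) (@trunc_log_eq 2 a) ?(ltnW lo) //.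
by rewrite (ltn_eqF lo).
Qed.

Lemma g_mersenne k m : (m.+1 = 2 ^ k.+1)%N -> g m = mersenne_sign k.
Proof.
case: k => [|k] hm; first by have -> : m = 1%N by move: hm; rewrite expn1; lia.
have m_neq1 : m != 1%N by apply: contra_eqN hm => /eqP ->; rewrite !expnS; lia.
by rewrite /g (negbTE m_neq1) hm trunc_expnK // eqxx.
Qed.

Lemma det_row_single (R : comPzRingType) n (A : 'M[R]_n) i0 j0 :
  (forall j, j != j0 -> A i0 j = 0) -> \det A = A i0 j0 * cofactor A i0 j0.
Proof.
move=> A_i0; rewrite (expand_det_row _ i0) (bigD1 j0) //= big1 ?addr0 //.
by move=> j /A_i0 ->; rewrite mul0r.
Qed.

Lemma det_col_single (R : comPzRingType) n (A : 'M[R]_n) i0 j0 :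
  (forall i, i != i0 -> A i j0 = 0) -> \det A = A i0 j0 * cofactor A i0 j0.
Proof.
move=> A_j0; rewrite -det_tr (@det_row_single _ _ _ j0 i0) ?mxE ?cofactor_tr //.
by move=> i /A_j0; rewrite mxE.
Qed.

Definition gapped (p q i : nat) : nat :=
  if (i < p)%N then i else (q + (i - p))%N.

(* The principal minor of the infinite Hankel matrix (g(i+j+1)) on the first
   N indices of {0, ..., p-1} U {q, q+1, ...}. *)
Definition hankel_minor N p q : 'M[int]_N :=
  \matrix_(i < N, j < N) g (gapped p q i + gapped p q j + 1).

Lemma gapped_id p q i : p = q \/ (i < p)%N -> gapped p q i = i.
Proof. by rewrite /gapped; case: ltnP => // ? [<-|]; lia. Qed.

Lemma hankel_minorE N p q : p = q \/ (N <= p)%N ->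
  hankel_minor N p q = \matrix_(i < N, j < N) g (i + j + 1).
Proof.
move=> pq; apply/matrixP => i j; rewrite !mxE !gapped_id //.
all: by case: pq; [left | right; apply: leq_trans (ltn_ord _) _].
Qed.

Lemma gapped_bump p q i : gapped p q (bump p i) = gapped p q.+1 i.
Proof. by rewrite /gapped /bump; case: (leqP p i) => hpi; case: ifP; lia. Qed.

Lemma bump_lt h i : (i < h)%N -> bump h i = i.
Proof. by move=> ih; rewrite /bump leqNgt ih. Qed.

Lemma bump_ge h i : (h <= i)%N -> bump h i = i.+1.
Proof. by move=> hi; rewrite /bump hi. Qed.

Section Peel.

Variables (k p q N : nat).
(* [qN] puts g(2^(k+1) - 1) in column p of the last row of
   [hankel_minor N.+2 p q]; it is invariant under (N, q) |-> (N - 2, q + 1). *)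
Hypotheses (pq : (p <= q)%N) (pN : (p <= N)%N)
  (qN : (q.*2 + N.+3 = 2 ^ k.+1 + p)%N).

Lemma hankel_minor_lastrow_eq0 j :
  (j < N.+2)%N -> j != p -> g (gapped p q N.+1 + gapped p q j + 1) = 0.
Proof.
move=> jN jp; move: qN; rewrite expnS /gapped ltnNge (leqW pN) /= => qN'.
case: ltnP => jp'; first by apply: (@g_eq0 k); apply/andP; split; lia.
by apply: (@g_eq0 k.+1); rewrite !expnS; apply/andP; split; lia.
Qed.

Lemma hankel_minor_lastrow_p :
  g (gapped p q N.+1 + gapped p q p + 1) = mersenne_sign k.
Proof.
by apply: g_mersenne; move: qN; rewrite /gapped ltnn ltnNge (leqW pN) /=; lia.
Qed.

Lemma det_hankel_minor_peel :
  \det (hankel_minor N.+2 p q) = - \det (hankel_minor N p q.+1).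
Proof.
have pN1 : (p < N.+1)%N by rewrite ltnS.
pose p2 : 'I_N.+2 := Ordinal (leqW pN1); pose p1 : 'I_N.+1 := Ordinal pN1.
rewrite (@det_row_single _ _ _ ord_max p2); last first.
  by move=> j jp; rewrite mxE hankel_minor_lastrow_eq0.
rewrite /cofactor (@det_col_single _ _ _ p1 ord_max); last first.
  move=> i ip; rewrite !mxE /= bump_lt // bump_ge //.
  have ltiN : (i < N.+2)%N := ltnW (ltn_ord i).
  by rewrite (addnC (gapped p q i)) (hankel_minor_lastrow_eq0 ltiN ip).
have corner : hankel_minor N.+2 p q ord_max p2 = mersenne_sign k.
  by rewrite mxE hankel_minor_lastrow_p.
have corner' : row' ord_max (col' p2 (hankel_minor N.+2 p q)) p1 ord_max
    = mersenne_sign k.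
  rewrite !mxE /= bump_lt // bump_ge //.
  by rewrite (addnC (gapped p q p)) hankel_minor_lastrow_p.
have minor :
    row' p1 (col' ord_max (row' ord_max (col' p2 (hankel_minor N.+2 p q))))
    = hankel_minor N p q.+1.
  apply/matrixP => i j; have ltiN : (i < N)%N := ltn_ord i.
  have ltjN : (j < N)%N := ltn_ord j.
  rewrite !mxE /= -!gapped_bump (@bump_lt N j) // (@bump_lt N.+1 (bump p i)) //.
  by rewrite /bump; case: leqP; lia.
have sign : (-1) ^+ (N.+1 + p) * (-1) ^+ (p + N) = -1 :> int.
  by rewrite -exprD signrE !oddD /=; case: odd; case: odd.
rewrite /cofactor corner corner' minor /=.
transitivity (mersenne_sign k * mersenne_sign k *
  ((-1) ^+ (N.+1 + p) * (-1) ^+ (p + N)) * \det (hankel_minor N p q.+1)).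
  by ring.
by rewrite mersenne_sign_sqr sign mul1r mulN1r.
Qed.

End Peel.

Lemma det_hankel_minor_peeln k p t q : (p <= q)%N ->
  (q.*2 + (p + t.*2).+2 = 2 ^ k.+1 + p)%N ->
  \det (hankel_minor (p + t.*2).+1 p q) =
  (-1) ^+ t * \det (hankel_minor p.+1 p (q + t)).
Proof.
elim: t q => [|t IH] q pq qN; first by rewrite double0 !addn0 expr0 mul1r.
rewrite doubleS !addnS (@det_hankel_minor_peel k) //; last 2 first.
- by rewrite leqW // leq_addr.
- by move: qN; rewrite doubleS !addnS.
rewrite IH ?addnS ?exprS ?mulN1r ?mulNr ?leqW //.
by move: qN; rewrite !doubleS; lia.
Qed.

Lemma det_hankel_minor_single_tail k p q : (q.+1 = 2 ^ k)%N -> (p <= q)%N ->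
  \det (hankel_minor p.+1 p q) =
  mersenne_sign k * \det (\matrix_(i < p, j < p) g (i + j + 1)).
Proof.
move=> qk pq.
have gapped_p : gapped p q p = q by rewrite /gapped ltnn subnn addn0.
rewrite (@det_row_single _ _ _ ord_max ord_max); last first.
  move=> j jp; have ltjp : (j < p)%N by rewrite ltn_neqAle jp -ltnS ltn_ord.
  rewrite mxE /= gapped_p gapped_id; last by right.
  by apply: (@g_eq0 k); rewrite expnS; apply/andP; split; lia.
rewrite /cofactor mxE /= gapped_p (@g_mersenne k); last by rewrite expnS; lia.
rewrite -signr_odd addnn odd_double expr0 mul1r.
rewrite -(@hankel_minorE p p q); last by right.
by congr (_ * \det _); apply/matrixP => i j; rewrite !mxE /= !bump_lt.
Qed.

Lemma det_hankel_pow2_add k t p : (t + p + 1 = 2 ^ k)%N ->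
  \det (\matrix_(i < 2 ^ k + t, j < 2 ^ k + t) g (i + j + 1)) =
  mersenne_sign k * (-1) ^+ t * \det (\matrix_(i < p, j < p) g (i + j + 1)).
Proof.
move=> tp; have -> : (2 ^ k + t = (p + t.*2).+1)%N by rewrite -tp; lia.
rewrite -(@hankel_minorE _ p p); last by left.
rewrite (@det_hankel_minor_peeln k) //; last by rewrite expnS -tp; lia.
rewrite (@det_hankel_minor_single_tail k); [|lia|lia].
by rewrite mulrCA mulrA.
Qed.

Lemma pow2_add_decomposition n : (0 < n)%N ->
  exists k t p, n = (2 ^ k + t)%N /\ (t + p + 1 = 2 ^ k)%N.
Proof.
move=> n_gt0; have /andP[lo hi] := trunc_log_bounds (isT : (1 < 2)%N) n_gt0.
move: (trunc_log 2 n) lo hi => k lo; rewrite expnS => hi.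
by exists k, (n - 2 ^ k)%N, (2 ^ k - 1 - (n - 2 ^ k))%N; split; lia.
Qed.

Theorem theorem5p11 (n : nat) :
  \det (\matrix_(i < n, j < n) g (i + j + 1)%N) = r n.
Proof.
elim/ltn_ind: n => -[|n] IH; first by rewrite det_mx00.
have [k [t [p [n_eq tp]]]] := pow2_add_decomposition (ltn0Sn n).
by rewrite n_eq (det_hankel_pow2_add tp) (r_pow2_add tp) IH; last lia.
Qed.
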